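(* Let $n\geq 2$. For $f:[0,1]\to\mathbb{R}$ and $x\in[0,1]$ define $$R_n(f,x)=\sum_{k=0}^{n} f\left(\frac{k}{n}\right)\binom{n}{k}\frac{x^{(k,c(x))}\,(1-x)^{(n-k,c(x))}}{1^{(n,c(x))}},\qquad c(x)=-\frac{\min\{x,1-x\}}{n-1}.$$ If $f:[0,1]\to\mathbb{R}$ is monotone increasing (respectively decreasing), then $R_n(f,\cdot):[0,1]\to\mathbb{R}$ is also monotone increasing (respectively decreasing).
   Context: For real $z$ and $h$, the rising factorial with increment $h$ is $z^{(0,h)}=1$ and $z^{(m,h)}=z(z+h)\cdots(z+(m-1)h)$ for integers $m\geq 1$. Equivalently, $R_n(f,x)=E\,f\left(\frac1n X\right)$, where $X$ is the number of white balls in $n$ draws from a Pólya urn initially containing $x$ white and $1-x$ black balls with replacement parameter $c(x)$. *)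

From mathcomp Require Import all_boot all_order all_algebra.
From mathcomp Require Import all_reals.
Set Implicit Arguments. Unset Strict Implicit. Unset Printing Implicit Defensive.
Import Order.TTheory GRing.Theory Num.Theory.
Local Open Scope ring_scope.

Definition rising_fact (R : realType) (z h : R) (m : nat) : R :=
  \prod_(i < m) (z + i%:R * h).

Definition polya_c (R : realType) (n : nat) (x : R) : R :=
  - (Num.min x (1 - x)) / (n.-1)%:R.

Definition polya_op (R : realType) (n : nat) (f : R -> R) (x : R) : R :=
  \sum_(k < n.+1)
    f (k%:R / n%:R) * 'C(n, k)%:R *
    (rising_fact x (polya_c n x) k * rising_fact (1 - x) (polya_c n x) (n - k)
     / rising_fact 1 (polya_c n x) n).

Definition incr_on01 (R : realType) (g : R -> R) : Prop :=
  forall x y : R, 0 <= x -> x <= y -> y <= 1 -> g x <= g y.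
Definition decr_on01 (R : realType) (g : R -> R) : Prop :=
  forall x y : R, 0 <= x -> x <= y -> y <= 1 -> g y <= g x.

(* R_n(f, x) is the mean of the values f(k/n) under the weights
   w_x(k) = C(n,k) x^(k,c) (1-x)^(n-k,c), c = c(x), whose total is 1^(n,c) by the
   Vandermonde identity for rising factorials.  For i < n the factor x + i c(x)
   of x^(k,c) equals x - (i/(n-1)) min(x, 1-x): it is nonnegative and
   nondecreasing in x; since c(1-x) = c(x), the factors of (1-x)^(n-k,c) are
   nonnegative and nonincreasing in x.  Hence for x <= y the ratio w_y(k)/w_x(k)
   is nondecreasing in k, and shifting the weights upwards in this
   likelihood-ratio order raises the mean of the nondecreasing sequence f(k/n).
   The decreasing case follows by applying the increasing one to -f. *)

From mathcomp Require Import all_boot all_order all_algebra.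
From mathcomp Require Import all_reals.
From mathcomp Require Import ring lra zify.
Set Implicit Arguments. Unset Strict Implicit. Unset Printing Implicit Defensive.
Import Order.TTheory GRing.Theory Num.Theory.
Local Open Scope ring_scope.

Definition weighted_mean (R : fieldType) (N : nat) (g Q : nat -> R) : R :=
  (\sum_(k < N) g k * Q k) / \sum_(k < N) Q k.

(* [Q'] dominates [Q] in the likelihood-ratio order ([Q' / Q] nondecreasing),
   cross-multiplied so that vanishing weights are allowed. *)
Definition lr_le (R : numDomainType) (N : nat) (Q Q' : nat -> R) : Prop :=
  forall k l, (k < l < N)%N -> Q l * Q' k <= Q k * Q' l.

Lemma ler_weighted_mean_lr (R : realFieldType) N (g Q Q' : nat -> R) :
  (forall k l, (k <= l < N)%N -> g k <= g l) -> lr_le N Q Q' ->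
  0 < \sum_(k < N) Q k -> 0 < \sum_(k < N) Q' k ->
  weighted_mean N g Q <= weighted_mean N g Q'.
Proof.
move=> g_homo QQ' Q_gt0 Q'_gt0.
rewrite /weighted_mean ler_pdivrMr // mulrAC ler_pdivlMr //.
set D := \sum_(k < N) \sum_(l < N) (g l - g k) * (Q k * Q' l - Q l * Q' k).
have D_ge0 : 0 <= D.
  apply: sumr_ge0 => k _; apply: sumr_ge0 => l _.
  case: (ltngtP k l) => [kl|lk|/val_inj->]; last by rewrite subrr mul0r.
  - have g_kl : g k <= g l by apply: g_homo; rewrite (ltnW kl) ltn_ord.
    have Q_kl : Q l * Q' k <= Q k * Q' l by apply: QQ'; rewrite kl ltn_ord.
    by apply: mulr_ge0; rewrite subr_ge0.
  - have g_lk : g l <= g k by apply: g_homo; rewrite (ltnW lk) ltn_ord.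
    have Q_lk : Q k * Q' l <= Q l * Q' k by apply: QQ'; rewrite lk ltn_ord.
    by apply: mulr_le0; rewrite subr_le0.
set T := \sum_(k < N) \sum_(l < N) (g l - g k) * Q k * Q' l.
have D_eq : D = T + T.
  rewrite {2}/T exchange_big /= -big_split; apply: eq_bigr => k _ /=.
  by rewrite -big_split; apply: eq_bigr => l _ /=; ring.
have T_eq : T = (\sum_(k < N) g k * Q' k) * (\sum_(k < N) Q k)
                - (\sum_(k < N) g k * Q k) * (\sum_(k < N) Q' k).
  rewrite !big_distrlr /= [X in _ = X - _]exchange_big -sumrB.
  by apply: eq_bigr => k _; rewrite -sumrB; apply: eq_bigr => l _ /=; ring.
lra.
Qed.

Lemma sum_binS (V : nmodType) n (F : nat -> nat -> V) :
  \sum_(k < n.+2) F k (n.+1 - k)%N *+ 'C(n.+1, k)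
  = \sum_(k < n.+1) (F k.+1 (n - k)%N + F k (n.+1 - k)%N) *+ 'C(n, k).
Proof.
rewrite -(big_mkord xpredT (fun k => F k (n.+1 - k)%N *+ 'C(n.+1, k))).
rewrite -(big_mkord xpredT (fun k => (F k.+1 (n - k)%N + F k (n.+1 - k)%N) *+ 'C(n, k))).
under [in RHS]eq_bigr do rewrite mulrnDl.
rewrite big_nat_recl //= [in RHS]big_split /= [X in _ = _ + X]big_nat_recl //.
under eq_bigr do rewrite subSS binS mulrnDr.
rewrite big_split /= big_nat_recr //= (bin_small (ltnSn n)) mulr0n addr0 !bin0.
under [X in _ = _ + (_ + X)]eq_bigr do rewrite subSS.
by rewrite [in RHS]addrC addrA.
Qed.

Lemma rising_factS (R : realType) (z h : R) m :
  rising_fact z h m.+1 = rising_fact z h m * (z + m%:R * h).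
Proof. by rewrite /rising_fact big_ord_recr. Qed.

Lemma rising_factDn (R : realType) (w b h : R) n :
  rising_fact (w + b) h n
  = \sum_(k < n.+1) rising_fact w h k * rising_fact b h (n - k)%N *+ 'C(n, k).
Proof.
elim: n => [|n IHn]; first by rewrite big_ord1 /rising_fact !big_ord0 mulr1.
rewrite rising_factS IHn mulr_suml.
rewrite (sum_binS _ (fun i j => rising_fact w h i * rising_fact b h j)).
apply: eq_bigr => k _; have le_k_n : (k <= n)%N by rewrite -ltnS.
rewrite subSn // 2!rising_factS mulrnAl natrB //; congr (_ *+ _); ring.
Qed.

Definition binomial_weight (R : pzSemiRingType) n (a b : nat -> R) k : R :=
  'C(n, k)%:R * (\prod_(i < k) a i) * \prod_(i < n - k) b i.

Lemma lr_le_binomial_weight (R : realDomainType) n (a a' b b' : nat -> R) :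
  (forall i, (i < n)%N -> 0 <= a i <= a' i) ->
  (forall i, (i < n)%N -> 0 <= b' i <= b i) ->
  lr_le n.+1 (binomial_weight n a b) (binomial_weight n a' b').
Proof.
move=> ha hb k l /andP[lt_kl lt_ln].
have a_ge0 i : (i < n)%N -> 0 <= a i by move=> /ha /andP[].
have b'_ge0 i : (i < n)%N -> 0 <= b' i by move=> /hb /andP[].
have a'_ge0 i : (i < n)%N -> 0 <= a' i by move=> /ha /andP[a0 ?]; apply: le_trans a0 _.
have b_ge0 i : (i < n)%N -> 0 <= b i by move=> /hb /andP[b0 ?]; apply: le_trans b0 _.
have prod_ge0 (u : nat -> R) j m : (forall i, (i < n)%N -> 0 <= u i) ->
    (j + m <= n)%N -> 0 <= \prod_(i < m) u (j + i)%N.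
  by move=> u_ge0 le_jm_n; apply: prodr_ge0 => i _; apply: u_ge0; have := ltn_ord i; lia.
have [d ld] : exists d, l = (k + d)%N by exists (l - k)%N; lia.
rewrite ld /binomial_weight; have -> : (n - k = n - (k + d) + d)%N by lia.
rewrite !big_split_ord /=.
set e := (n - (k + d))%N.
set A := \prod_(i < k) a i; set A' := \prod_(i < k) a' i.
set B := \prod_(i < e) b i; set B' := \prod_(i < e) b' i.
set Da := \prod_(i < d) a (k + i)%N; set Da' := \prod_(i < d) a' (k + i)%N.
set Db := \prod_(i < d) b (e + i)%N; set Db' := \prod_(i < d) b' (e + i)%N.
set C := 'C(n, k)%:R; set Cd := 'C(n, k + d)%:R.
pose K := Cd * C * A * A' * B * B'.
have K_ge0 : 0 <= K by rewrite !mulr_ge0 // ?(prod_ge0 _ 0%N) //; lia.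
have le_D : Da * Db' <= Da' * Db.
  apply: ler_pM; rewrite ?prod_ge0 //; try lia.
  - by apply: ler_prod => i _; apply: ha; have := ltn_ord i; lia.
  - by apply: ler_prod => i _; apply: hb; have := ltn_ord i; lia.
rewrite [leLHS](_ : _ = K * (Da * Db')) ?[leRHS](_ : _ = K * (Da' * Db)) /K; try ring.
exact: ler_wpM2l.
Qed.

Lemma natr_div_ge0_le1 (F : numFieldType) (k m : nat) :
  (k <= m)%N -> 0 <= (k%:R / m%:R : F) <= 1.
Proof.
case: m => [|m] km; first by rewrite invr0 mulr0 lexx ler01.
by rewrite divr_ge0 //= ler_pdivrMr ?ltr0Sn // mul1r ler_nat.
Qed.

Lemma polya_c_compl (R : realType) n (x : R) : polya_c n (1 - x) = polya_c n x.
Proof. by rewrite /polya_c subKr minC. Qed.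

Section PolyaFactors.
Variables (R : realType) (n i : nat).
Hypothesis lt_i_n : (i < n)%N.

Let polya_factorE (x : R) :
  i%:R * polya_c n x = - (i%:R / (n.-1)%:R * Num.min x (1 - x)).
Proof. rewrite /polya_c; ring. Qed.

Let ratio_in01 : 0 <= (i%:R / (n.-1)%:R : R) <= 1.
Proof. by apply: natr_div_ge0_le1; lia. Qed.

Lemma polya_factor_ge0 (x : R) : 0 <= x -> 0 <= x + i%:R * polya_c n x.
Proof.
move: ratio_in01 => /andP[? ?] ?; rewrite polya_factorE.
by case: (lerP x (1 - x)); nra.
Qed.

Lemma polya_factor_homo (x y : R) :
  x <= y -> x + i%:R * polya_c n x <= y + i%:R * polya_c n y.
Proof.
move: ratio_in01 => /andP[? ?] ?; rewrite !polya_factorE.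
by case: (lerP x (1 - x)); case: (lerP y (1 - y)); nra.
Qed.

Lemma polya_factor1_gt0 (x : R) : 0 < 1 + i%:R * polya_c n x.
Proof.
move: ratio_in01 => /andP[? ?]; rewrite polya_factorE.
by case: (lerP x (1 - x)); nra.
Qed.

End PolyaFactors.

Definition polya_weight (R : realType) (n : nat) (x : R) : nat -> R :=
  binomial_weight n (fun i => x + i%:R * polya_c n x)
                    (fun i => 1 - x + i%:R * polya_c n x).

Lemma sum_polya_weight (R : realType) n (x : R) :
  \sum_(k < n.+1) polya_weight n x k = rising_fact 1 (polya_c n x) n.
Proof.
rewrite -[in RHS](subrKC x 1) rising_factDn; apply: eq_bigr => k _.
by rewrite /polya_weight /binomial_weight -mulrA mulr_natl.
Qed.

Lemma sum_polya_weight_gt0 (R : realType) n (x : R) :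
  0 < \sum_(k < n.+1) polya_weight n x k.
Proof. by rewrite sum_polya_weight; apply: prodr_gt0 => i _; apply: polya_factor1_gt0. Qed.

Lemma polya_opE (R : realType) n (f : R -> R) x :
  polya_op n f x = weighted_mean n.+1 (fun k => f (k%:R / n%:R)) (polya_weight n x).
Proof.
rewrite /weighted_mean sum_polya_weight mulr_suml; apply: eq_bigr => k _.
rewrite /polya_weight /binomial_weight /rising_fact /=; ring.
Qed.

Lemma polya_weight_lr (R : realType) n (x y : R) :
  0 <= x -> x <= y -> y <= 1 -> lr_le n.+1 (polya_weight n x) (polya_weight n y).
Proof.
move=> x_ge0 le_xy y_le1; apply: lr_le_binomial_weight => i lt_in; apply/andP; split.
- exact: polya_factor_ge0.
- exact: polya_factor_homo.
- by rewrite -polya_c_compl; apply: polya_factor_ge0; rewrite // subr_ge0.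
- rewrite -(polya_c_compl n x) -(polya_c_compl n y).
  by apply: polya_factor_homo; rewrite // lerD2l lerN2.
Qed.

Lemma polya_op_incr (R : realType) n (f : R -> R) :
  incr_on01 f -> incr_on01 (polya_op n f).
Proof.
move=> f_incr x y x_ge0 le_xy y_le1; rewrite !polya_opE.
apply: ler_weighted_mean_lr.
- move=> k l /andP[le_kl lt_ln].
  have /andP[k_ge0 _] : 0 <= (k%:R / n%:R : R) <= 1 by apply: natr_div_ge0_le1; lia.
  have /andP[_ l_le1] : 0 <= (l%:R / n%:R : R) <= 1 by apply: natr_div_ge0_le1; lia.
  by apply: f_incr => //; rewrite ler_wpM2r ?invr_ge0 ?ler_nat.
- exact: polya_weight_lr.
- exact: sum_polya_weight_gt0.
- exact: sum_polya_weight_gt0.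
Qed.

Lemma polya_opN (R : realType) n (f : R -> R) x :
  polya_op n (fun t => - f t) x = - polya_op n f x.
Proof. by rewrite /polya_op -sumrN; apply: eq_bigr => k _; rewrite !mulNr. Qed.

Theorem theorem3p3 (R : realType) (n : nat) (hn : (2 <= n)%N) (f : R -> R) :
  (incr_on01 f -> incr_on01 (polya_op n f)) /\
  (decr_on01 f -> decr_on01 (polya_op n f)).
Proof.
split=> [|f_decr]; first exact: polya_op_incr.
move=> x y x_ge0 le_xy y_le1; rewrite -lerN2 -!polya_opN.
by apply: polya_op_incr => // u v u_ge0 le_uv v_le1; rewrite lerN2 f_decr.
Qed.
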